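(* Let $S$ be a square-free semigroup, $D$ a division ring, $(\alpha,\xi)\in Z^2(S,D^* )$ a normal 2-cocycle and $R=D^{\alpha}_{\xi}S$. Let $\Lambda: H^1_{(\alpha,\xi)}(S,D^* )\to\mathrm{Out}\,R$, $B^1_{(\alpha,\xi)}(S,D^* )(\mu,\eta)\mapsto(\mathrm{Inn}\,R)\sigma_{\mu\eta}$, and let $\Phi:\mathrm{Out}\,R\to\mathrm{Aut}(S)$ be the homomorphism described below. Then $\mathrm{Im}\,\Lambda=\mathrm{Ker}\,\Phi$.
   Context: $D$ is a division ring, $D^*$ its group of units, $\mathrm{Aut}(D)$ its ring automorphism group, $\rho_d(x)=dxd^{-1}$. A square-free semigroup is a semigroup $S$ (product $s\cdot t$) with zero $\theta$ and a finite set $E\subseteq S$ of nonzero pairwise orthogonal idempotents with $S=\bigcup_{e,f\in E}e\cdot S\cdot f$ and $|e\cdot S\cdot f\setminus\{\theta\}|\le 1$; $S^*=S\setminus\{\theta\}$, each $s\in S^*$ equals $e\cdot s\cdot f$ for unique $e,f\in E$; $\mathrm{Aut}(S)$ is the semigroup automorphism group. $S^{<0>}=E$, $S^{<n>}=\{(s_1,\dots,s_n)\in S^n:s_1\cdots s_n\ne\theta\}$, $F^n(S,G)$ the group of functions $S^{<n>}\to G$; $\alpha_s=\alpha(s)$, $\mu_e=\mu(e)$. A 2-cocycle is $(\alpha,\xi)\in F^1(S,\mathrm{Aut}(D))\times F^2(S,D^* )$ with $\alpha_s(\xi(t,u))\xi(s,t\cdot u)=\xi(s,t)\xi(s\cdot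 t,u)$ on $S^{<3>}$ and $\alpha_s\circ\alpha_t=\rho_{\xi(s,t)}\circ\alpha_{s\cdot t}$ on $S^{<2>}$; normal means $\alpha_e=1_D$, $\xi(e,e)=1$ for $e\in E$. $D^{\alpha}_{\xi}S$ is the left $D$-vector space with basis $S^*$ and multiplication extended by distributivity from $(d_1s)(d_2t)=d_1\alpha_s(d_2)\xi(s,t)(s\cdot t)$ if $s\cdot t\ne\theta$, $0$ otherwise. $\mathrm{Inn}\,R$ is the group of inner automorphisms, $\mathrm{Out}\,R=\mathrm{Aut}\,R/\mathrm{Inn}\,R$. $Z^1_{(\alpha,\xi)}(S,D^* )$ is the subgroup of $F^0(S,\mathrm{Aut}(D))\ltimes F^1(S,D^* )$ of pairs $(\mu,\eta)$ with $\mu_e\circ\alpha_s\circ\mu_f^{-1}=\rho_{\eta(s)}\circ\alpha_s$ for $s=e\cdot s\cdot f\in S^*$ and $\mu_e(\xi(s,t))=\eta(s)\alpha_s(\eta(t))\xi(s,t)\eta(s\cdot t)^{-1}$ for $(s,t)\in S^{<2>}$, $s=e\cdot s$. $B^1_{(\alpha,\xi)}(S,D^* )$ is its normal subgroup of pairs for which some $\epsilon\in F^0(S,D^* )$ gives $\mu_e=\rho_{\epsilon(e)}$ and $\eta(s)=\epsilon(e)\alpha_s(\epsilon(f)^{-1})$ for $s=e\cdot s\cdot f$; $H^1_{(\alpha,\xi)}(S,D^* )=Z^1_{(\alpha,\xi)}/B^1_{(\alpha,\xi)}$. For $(\mu,\eta)\in Z^1_{(\alpha,\xi)}(S,D^*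 )$, $\sigma_{\mu\eta}\in\mathrm{Aut}\,R$ is the additive map $\sigma_{\mu\eta}(ds)=\mu_e(d)\eta(s)s$ ($s=e\cdot s$). The map $\Phi$: let $\mathrm{Aut}_0R=\{\gamma\in\mathrm{Aut}\,R:\gamma(E)=E\}$. Every coset $(\mathrm{Inn}\,R)\gamma$ contains some $\gamma_0\in\mathrm{Aut}_0R$, and every $\gamma_0\in\mathrm{Aut}_0R$ has the form $\gamma_0(ds)=\mu_e(d)\eta(s)\phi(s)$ ($d\in D$, $s=e\cdot s\in S^*$) for some $\mu\in F^0(S,\mathrm{Aut}(D))$, $\eta\in F^1(S,D^* )$ and $\phi\in\mathrm{Aut}(S)$, where $\phi$ depends only on the coset; $\Phi((\mathrm{Inn}\,R)\gamma_0)=\phi$ defines a group homomorphism $\mathrm{Out}\,R\to\mathrm{Aut}(S)$. *)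

From HB Require Import structures.
From mathcomp Require Import all_boot all_order all_algebra.
Unset Implicit Arguments.
Unset Strict Implicit.
Unset Printing Implicit Defensive.
Import GRing.Theory.
Local Open Scope ring_scope.

(* A square-free semigroup: carrier S (finite; finiteness follows from the
   definition since S is a finite union of sets with <= 2 elements),
   product [mul], zero [th], finite set E of idempotents. *)
Section Defs.
Variable S : finType.
Variables (mul : S -> S -> S) (th : S) (E : {set S}).

Definition in_eSf (e f s : S) : Prop := exists t, s = mul (mul e t) f.

Definition square_free_semigroup : Prop :=
  [/\ associative mul /\ (forall s, mul th s = th /\ mul s th = th),
      (forall e, e \in E -> e != th /\ mul e e = e),
      (forall e f, e \in E -> f \in E -> e != f -> mul e f = th),
      (forall s, exists e f, [/\ e \in E, f \in E & in_eSf e f s]) &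
      (forall e f s t, e \in E -> f \in E -> in_eSf e f s -> in_eSf e f t ->
          s != th -> t != th -> s = t)].

Definition is_S_aut (phi : S -> S) : Prop :=
  bijective phi /\ (forall s t, phi (mul s t) = mul (phi s) (phi t)).

(* S^* = S \ {theta}, the basis of R *)
Definition Sstar := {s : S | s != th}.

Definition lidem (s : S) : S := odflt th [pick e in E | mul e s == s].

Variable D : unitRingType.

Definition division_ring : Prop := forall x : D, x != 0 -> x \is a GRing.unit.

Definition is_ring_aut (f : D -> D) : Prop :=
  [/\ bijective f, f 1 = 1, {morph f : x y / x + y} & {morph f : x y / x * y}].

Definition rho (d x : D) : D := d * x * d^-1.

Variables (alpha : S -> D -> D) (xi : S -> S -> D).

Definition normal_2cocycle : Prop :=
  [/\ (forall s, s != th -> is_ring_aut (alpha s)),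
      (forall s t, mul s t != th -> xi s t != 0),
      (forall s t u, mul (mul s t) u != th ->
          alpha s (xi t u) * xi s (mul t u) = xi s t * xi (mul s t) u),
      (forall s t, mul s t != th ->
          forall d, alpha s (alpha t d) = rho (xi s t) (alpha (mul s t) d)) &
      (forall e, e \in E -> (forall d, alpha e d = d) /\ xi e e = 1)].

(* The ring R = D^alpha_xi S : left D-vector space with basis S^*;
   an element is its coefficient function S^* -> D. *)
Local Notation R := {ffun Sstar -> D}.

(* the element d s of R (zero if s = theta) *)
Definition bvec (d : D) (s : S) : R := [ffun u : Sstar => if val u == s then d else 0].

Definition Rmul (x y : R) : R :=
  [ffun u : Sstar => \sum_(s : Sstar) \sum_(t : Sstar | mul (val s) (val t) == val u)
      x s * alpha (val s) (y t) * xi (val s) (val t)].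

(* the identity of R : sum of the e in E *)
Definition Rone : R := [ffun u : Sstar => if val u \in E then 1 else 0].

Definition is_R_aut (g : R -> R) : Prop :=
  [/\ bijective g, g Rone = Rone, {morph g : x y / x + y} & {morph g : x y / Rmul x y}].

Definition is_inner (g : R -> R) : Prop :=
  exists u v : R, [/\ Rmul u v = Rone, Rmul v u = Rone &
                      forall x, g x = Rmul (Rmul u x) v].

Definition is_R_aut0 (g : R -> R) : Prop :=
  [/\ is_R_aut g,
      (forall e, e \in E -> exists2 f, f \in E & g (bvec 1 e) = bvec 1 f) &
      (forall f, f \in E -> exists2 e, e \in E & g (bvec 1 e) = bvec 1 f)].

Definition Z1 (mu : S -> D -> D) (eta : S -> D) : Prop :=
  [/\ (forall e, e \in E -> is_ring_aut (mu e)),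
      (forall s, s != th -> eta s != 0),
      (* mu_e o alpha_s o mu_f^-1 = rho_(eta s) o alpha_s, for s = e.s.f in S^* ;
         here d' = mu_f^-1 d *)
      (forall s e f, s != th -> e \in E -> f \in E -> s = mul (mul e s) f ->
          forall d d', mu f d' = d -> mu e (alpha s d') = rho (eta s) (alpha s d)) &
      (forall s t e, mul s t != th -> e \in E -> s = mul e s ->
          mu e (xi s t) = eta s * alpha s (eta t) * xi s t * (eta (mul s t))^-1)].

Definition sigma (mu : S -> D -> D) (eta : S -> D) (x : R) : R :=
  [ffun u : Sstar => mu (lidem (val u)) (x u) * eta (val u)].

(* Phi((Inn R) gamma) = phi : some gamma0 in Aut_0 R inside the coset
   (Inn R) gamma has the form gamma0(d s) = mu_e(d) eta(s) phi(s). *)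
Definition Phi_rel (g : R -> R) (phi : S -> S) : Prop :=
  exists g0 : R -> R,
    [/\ is_R_aut0 g0,
        (exists iota, is_inner iota /\ forall x, g0 x = iota (g x)) &
        exists (mu : S -> D -> D) (eta : S -> D),
          [/\ (forall e, e \in E -> is_ring_aut (mu e)),
              (forall s, s != th -> eta s != 0),
              is_S_aut phi &
              (forall d s e, s != th -> e \in E -> s = mul e s ->
                  g0 (bvec d s) = bvec (mu e d * eta s) (phi s))]].

End Defs.

From HB Require Import structures.
From mathcomp Require Import all_boot all_order all_algebra.
From Stdlib Require Import IndefiniteDescription.
Import GRing.Theory.
Local Open Scope ring_scope.
Set Implicit Arguments. Unset Strict Implicit.

(* For (mu, eta) in Z^1 the map sigma_(mu eta) is an automorphism of R which
   fixes every idempotent e in E and sends d s to a multiple of s, so its coset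
   is sent by Phi to the identity.  Conversely, if the coset of gamma contains
   some gamma0 in Aut_0 R with gamma0(d s) = mu_e(d) eta(s) s, then gamma0 is
   literally sigma_(mu eta), and comparing gamma0((1 s)(d' t)) with
   gamma0(1 s) gamma0(d' t) on the basis of R yields both defining identities
   of Z^1.  In both directions the cosets agree because the inverse of an inner
   automorphism is inner. *)

Section RingAut.
Variables (D : unitRingType) (f : D -> D).
Hypothesis hf : is_ring_aut D f.

Lemma rautD x y : f (x + y) = f x + f y.
Proof. by case: hf. Qed.

Lemma rautM x y : f (x * y) = f x * f y.
Proof. by case: hf. Qed.

Lemma raut1 : f 1 = 1.
Proof. by case: hf. Qed.

Lemma raut0 : f 0 = 0.
Proof. by apply: (addrI (f 0)); rewrite -rautD !addr0. Qed.

End RingAut.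

Section CrossedProduct.
Variables (S : finType) (mul : S -> S -> S) (th : S) (E : {set S}).
Hypothesis HS : square_free_semigroup S mul th E.
Local Notation lid := (lidem S mul th E).

Lemma mulA : associative mul.
Proof. by case: HS => [[]]. Qed.

Lemma mul0s s : mul th s = th.
Proof. by case: HS => [[_ H]] _ _ _ _; case: (H s). Qed.

Lemma muls0 s : mul s th = th.
Proof. by case: HS => [[_ H]] _ _ _ _; case: (H s). Qed.

Lemma mul_neq_thl s t : mul s t != th -> s != th.
Proof. by apply: contraNneq => ->; rewrite mul0s. Qed.

Lemma mul_neq_thr s t : mul s t != th -> t != th.
Proof. by apply: contraNneq => ->; rewrite muls0. Qed.

Lemma idem_neq_th e : e \in E -> e != th.
Proof. by case: HS => _ H _ _ _ /H []. Qed.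

Lemma idemK e : e \in E -> mul e e = e.
Proof. by case: HS => _ H _ _ _ /H []. Qed.

Lemma idem_orth e f : e \in E -> f \in E -> e != f -> mul e f = th.
Proof. by case: HS => _ _ H _ _; apply: H. Qed.

Lemma idem_decomp s : exists e f, [/\ e \in E, f \in E, mul e s = s & mul s f = s].
Proof.
case: HS => _ _ _ H _; case: (H s) => e [f [eE fE [t ->]]].
by exists e, f; split; rewrite // ?mulA ?idemK // -!mulA idemK.
Qed.

Lemma lidem_unique e e' s : e \in E -> e' \in E -> mul e s = s -> mul e' s = s ->
  s != th -> e = e'.
Proof.
move=> eE e'E es e's; apply: contraNeq => ne.
by rewrite -e's -es mulA (idem_orth e'E eE) 1?eq_sym // mul0s.
Qed.

Lemma lidemP s : s != th -> lid s \in E /\ mul (lid s) s = s.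
Proof.
move=> sn; rewrite /lidem; case: pickP => [e /andP [eE /eqP es] | H] //=.
have [e [f [eE _ es _]]] := idem_decomp s.
by move: (H e); rewrite eE es eqxx.
Qed.

Lemma lidem_eq s e : s != th -> e \in E -> mul e s = s -> lid s = e.
Proof. by move=> sn eE es; have [? ?] := lidemP sn; apply: lidem_unique sn. Qed.

Lemma mul_lidem s t : mul s t != th -> mul s (lid t) = s.
Proof.
move=> st; have [lE lt] := lidemP (mul_neq_thr st).
have [_ [f [_ fE _ sf]]] := idem_decomp s.
suff <- : f = lid t by [].
apply: contraNeq st => ne.
by rewrite -sf -lt -mulA (mulA f) (idem_orth fE lE ne) mul0s muls0.
Qed.

Variables (D : unitRingType) (alpha : S -> D -> D) (xi : S -> S -> D).
Hypothesis HD : division_ring D.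
Hypothesis Hc : normal_2cocycle S mul th E D alpha xi.

Local Notation SS := (Sstar S th).
Local Notation R := {ffun SS -> D}.
Local Notation Rm := (Rmul S mul th D alpha xi).
Local Notation R1 := (Rone S th E D).
Local Notation bv := (bvec S th D).

Lemma alpha_aut s : s != th -> is_ring_aut D (alpha s).
Proof. by case: Hc => H _ _ _ _; apply: H. Qed.

Lemma alpha_idem e d : e \in E -> alpha e d = d.
Proof. by case: Hc => _ _ _ _ H /H [->]. Qed.

Lemma xi_idem e : e \in E -> xi e e = 1.
Proof. by case: Hc => _ _ _ _ H /H []. Qed.

Lemma xi_unit s t : mul s t != th -> xi s t \is a GRing.unit.
Proof. by case: Hc => _ H _ _ _ /H; apply: HD. Qed.

Lemma xi_cocycle s t u : mul (mul s t) u != th ->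
  alpha s (xi t u) * xi s (mul t u) = xi s t * xi (mul s t) u.
Proof. by case: Hc => _ _ H _ _; apply: H. Qed.

Lemma alpha_comp s t d : mul s t != th ->
  alpha s (alpha t d) = rho D (xi s t) (alpha (mul s t) d).
Proof. by case: Hc => _ _ _ H _ h; apply: H. Qed.

(* Normality propagates from xi(e, e) = 1 to xi(e, s) = xi(s, f) = 1 through
   the cocycle identity on (e, e, s) and (s, f, f). *)
Lemma xi_idem_l e s : e \in E -> mul e s = s -> s != th -> xi e s = 1.
Proof.
move=> eE es sn; have ees : mul (mul e e) s != th by rewrite idemK // es.
have := xi_cocycle ees; rewrite alpha_idem // xi_idem // mul1r es idemK //.
by rewrite -{3}(mul1r (xi e s)) => /(mulIr (xi_unit _)); apply; rewrite es.
Qed.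

Lemma xi_idem_r s f : f \in E -> mul s f = s -> s != th -> xi s f = 1.
Proof.
move=> fE sf sn; have sff : mul (mul s f) f != th by rewrite !sf.
have := xi_cocycle sff; rewrite xi_idem // idemK // sf (raut1 (alpha_aut sn)).
by rewrite mul1r -{1}(mulr1 (xi s f)) => /(mulrI (xi_unit _)) <- //; rewrite sf.
Qed.

Lemma bvec_th d : bv d th = 0.
Proof. by apply/ffunP => u; rewrite !ffunE (negbTE (valP u)). Qed.

Lemma bvec0 s : bv 0 s = 0.
Proof. by apply/ffunP => u; rewrite !ffunE; case: ifP. Qed.

Lemma bvec_inj d d' s : s != th -> bv d s = bv d' s -> d = d'.
Proof. by move=> sn /ffunP /(_ (Sub s sn)); rewrite !ffunE /= eqxx. Qed.

Lemma sum_if_val v (hv : v != th) (F : SS -> D) :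
  \sum_(a : SS) (if val a == v then F a else 0) = F (Sub v hv).
Proof.
rewrite (bigD1 (Sub v hv : SS)) //= eqxx big1 ?addr0 // => a ne.
by case: eqP => // av; case/eqP: ne; apply: val_inj.
Qed.

Lemma bvec_decomp (x : R) : x = \sum_(u : SS) bv (x u) (val u).
Proof.
apply/ffunP => w; rewrite sum_ffunE.
under eq_bigr do rewrite ffunE eq_sym.
by rewrite (sum_if_val (valP w)); congr (fun_of_fin x _); apply: val_inj.
Qed.

Lemma Rmul0l y : Rm 0 y = 0.
Proof.
apply/ffunP => u; rewrite !ffunE big1 // => s _; rewrite big1 // => t _.
by rewrite ffunE !mul0r.
Qed.

Lemma Rmul0r x : Rm x 0 = 0.
Proof.
apply/ffunP => u; rewrite !ffunE big1 // => s _; rewrite big1 // => t _.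
by rewrite ffunE (raut0 (alpha_aut (valP s))) mulr0 mul0r.
Qed.

Lemma RmulDl x y z : Rm (x + y) z = Rm x z + Rm y z.
Proof.
apply/ffunP => u; rewrite !ffunE -big_split; apply: eq_bigr => s _.
by rewrite -big_split; apply: eq_bigr => t _; rewrite ffunE !mulrDl.
Qed.

Lemma RmulDr x y z : Rm x (y + z) = Rm x y + Rm x z.
Proof.
apply/ffunP => u; rewrite !ffunE -big_split; apply: eq_bigr => s _.
rewrite -big_split; apply: eq_bigr => t _.
by rewrite ffunE (rautD (alpha_aut (valP s))) mulrDr mulrDl.
Qed.

Lemma Rmul_suml (I : Type) (r : seq I) (P : pred I) (F : I -> R) z :
  Rm (\sum_(i <- r | P i) F i) z = \sum_(i <- r | P i) Rm (F i) z.
Proof. exact: (big_morph (Rm^~ z) (fun x y => RmulDl x y z) (Rmul0l z)). Qed.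

Lemma Rmul_sumr (I : Type) (r : seq I) (P : pred I) (F : I -> R) z :
  Rm z (\sum_(i <- r | P i) F i) = \sum_(i <- r | P i) Rm z (F i).
Proof. exact: (big_morph (Rm z) (RmulDr z) (Rmul0r z)). Qed.

Lemma Rmul_sum_sum (A B : SS -> R) :
  Rm (\sum_a A a) (\sum_b B b) = \sum_a \sum_b Rm (A a) (B b).
Proof. by rewrite Rmul_suml; apply: eq_bigr => a _; rewrite Rmul_sumr. Qed.

Lemma Rmul_bvec d d' s t :
  Rm (bv d s) (bv d' t) = bv (d * alpha s d' * xi s t) (mul s t).
Proof.
have [->|sn] := eqVneq s th; first by rewrite bvec_th Rmul0l mul0s bvec_th.
have [->|tn] := eqVneq t th; first by rewrite bvec_th Rmul0r muls0 bvec_th.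
apply/ffunP => u; rewrite !ffunE eq_sym.
set c := (if _ then _ else _).
rewrite -(sum_if_val sn (fun=> c)); apply: eq_bigr => -[a an] _ /=.
rewrite big_mkcond /= ffunE /=; case: (a =P s) => [->|_]; last first.
  by rewrite big1 // => b _; case: ifP; rewrite ?mul0r.
rewrite -(sum_if_val tn (fun=> c)); apply: eq_bigr => -[b bn] _ /=.
rewrite ffunE /= /c; case: (b =P t) => [-> //|_].
by rewrite (raut0 (alpha_aut sn)) mulr0 mul0r; case: ifP.
Qed.

Lemma Rmul_bvec_assoc d d' d'' s t u :
  Rm (Rm (bv d s) (bv d' t)) (bv d'' u) = Rm (bv d s) (Rm (bv d' t) (bv d'' u)).
Proof.
rewrite !Rmul_bvec mulA.
have [->|stu] := eqVneq (mul (mul s t) u) th; first by rewrite !bvec_th.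
have st := mul_neq_thl stu; have sn := mul_neq_thl st.
have tu : mul t u != th by apply: (mul_neq_thr (s := s)); rewrite mulA.
congr bv; rewrite !(rautM (alpha_aut sn)) alpha_comp // /rho.
by rewrite -!mulrA xi_cocycle // mulKr // xi_unit.
Qed.

Lemma Rmul_assoc : associative Rm.
Proof.
move=> x y z; rewrite (bvec_decomp x) (bvec_decomp y) (bvec_decomp z).
rewrite !Rmul_sum_sum; apply: eq_bigr => a _.
under eq_bigr do rewrite Rmul_sumr.
under [RHS]eq_bigr do rewrite Rmul_suml.
rewrite [RHS]exchange_big; apply: eq_bigr => b _; apply: eq_bigr => c _.
by rewrite Rmul_bvec_assoc.
Qed.

Lemma Rmul1l_bvec d s : Rm R1 (bv d s) = bv d s.
Proof.
have [->|sn] := eqVneq s th; first by rewrite bvec_th Rmul0r.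
have [lE ls] := lidemP sn.
rewrite (bvec_decomp R1) Rmul_suml.
rewrite (bigD1 (Sub (lid s) (idem_neq_th lE) : SS)) //= big1.
  rewrite addr0 Rmul_bvec ffunE /= lE alpha_idem // xi_idem_l //.
  by rewrite mul1r mulr1 ls.
move=> u ne; rewrite Rmul_bvec ffunE.
case: ifP => uE; last by rewrite !mul0r bvec0.
have ul : val u != lid s by apply: contraNneq ne => e; apply/eqP/val_inj.
have -> : mul (val u) s = th by rewrite -ls mulA (idem_orth uE lE ul) mul0s.
exact: bvec_th.
Qed.

Lemma Rmul1r_bvec d s : Rm (bv d s) R1 = bv d s.
Proof.
have [->|sn] := eqVneq s th; first by rewrite bvec_th Rmul0l.
have [_ [f [_ fE _ sf]]] := idem_decomp s.
rewrite (bvec_decomp R1) Rmul_sumr.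
rewrite (bigD1 (Sub f (idem_neq_th fE) : SS)) //= big1.
  rewrite addr0 Rmul_bvec ffunE /= fE (raut1 (alpha_aut sn)) xi_idem_r //.
  by rewrite !mulr1 sf.
move=> u ne; rewrite Rmul_bvec ffunE; case: ifP => uE; last first.
  by rewrite (raut0 (alpha_aut sn)) mulr0 mul0r bvec0.
have fu : f != val u by apply: contraNneq ne => e; apply/eqP/val_inj.
have -> : mul s (val u) = th by rewrite -sf -mulA (idem_orth fE uE fu) muls0.
exact: bvec_th.
Qed.

Lemma Rmul1l x : Rm R1 x = x.
Proof.
rewrite [in LHS](bvec_decomp x) Rmul_sumr [RHS]bvec_decomp.
by apply: eq_bigr => u _; apply: Rmul1l_bvec.
Qed.

Lemma Rmul1r x : Rm x R1 = x.
Proof.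
rewrite [in LHS](bvec_decomp x) Rmul_suml [RHS]bvec_decomp.
by apply: eq_bigr => u _; apply: Rmul1r_bvec.
Qed.

Lemma inner_inverse iota : is_inner S mul th E D alpha xi iota ->
  exists iota', is_inner S mul th E D alpha xi iota' /\ cancel iota iota'.
Proof.
case=> u [v [uv vu iotaE]]; exists (fun x => Rm (Rm v x) u); split.
  by exists v, u.
by move=> y; rewrite iotaE !Rmul_assoc vu Rmul1l -Rmul_assoc vu Rmul1r.
Qed.

Section Sigma.
Variables (mu : S -> D -> D) (eta : S -> D).
Hypothesis Hmu : forall e, e \in E -> is_ring_aut D (mu e).
Local Notation sg := (sigma S mul th E D mu eta).

Lemma sigma_bvec d s e : s != th -> e \in E -> mul e s = s ->
  sg (bv d s) = bv (mu e d * eta s) s.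
Proof.
move=> sn eE es; apply/ffunP => u; rewrite !ffunE.
case: (val u =P s) => [-> | _]; first by rewrite (lidem_eq sn eE es).
by have [lE _] := lidemP (valP u); rewrite (raut0 (Hmu lE)) mul0r.
Qed.

Lemma sigmaD x y : sg (x + y) = sg x + sg y.
Proof.
apply/ffunP => u; rewrite !ffunE.
by have [lE _] := lidemP (valP u); rewrite (rautD (Hmu lE)) mulrDl.
Qed.

Lemma sigma0 : sg 0 = 0.
Proof. by apply: (addrI (sg 0)); rewrite -sigmaD !addr0. Qed.

Lemma sigma_sum (F : SS -> R) : sg (\sum_u F u) = \sum_u sg (F u).
Proof. exact: (big_morph sg sigmaD sigma0). Qed.

Hypothesis Heta : forall s, s != th -> eta s != 0.

Lemma eta_unit s : s != th -> eta s \is a GRing.unit.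
Proof. by move/Heta; apply: HD. Qed.

Hypothesis Hxi : forall s t e, mul s t != th -> e \in E -> s = mul e s ->
  mu e (xi s t) = eta s * alpha s (eta t) * xi s t * (eta (mul s t))^-1.

Lemma eta_idem e : e \in E -> eta e = 1.
Proof.
move=> eE; have ee : mul e e != th by rewrite idemK // idem_neq_th.
have := Hxi ee eE (esym (idemK eE)).
rewrite xi_idem // (raut1 (Hmu eE)) alpha_idem // mulr1 idemK //.
by rewrite mulrK // eta_unit // idem_neq_th.
Qed.

Lemma sigma_idem e : e \in E -> sg (bv 1 e) = bv 1 e.
Proof.
move=> eE; rewrite (sigma_bvec _ (idem_neq_th eE) eE (idemK eE)).
by rewrite (raut1 (Hmu eE)) mul1r eta_idem.
Qed.

Lemma sigma1 : sg R1 = R1.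
Proof.
apply/ffunP => u; rewrite !ffunE; have [lE _] := lidemP (valP u).
case: ifP => uE; first by rewrite (raut1 (Hmu lE)) mul1r eta_idem.
by rewrite (raut0 (Hmu lE)) mul0r.
Qed.

Hypothesis Halpha : forall s e f, s != th -> e \in E -> f \in E ->
  s = mul (mul e s) f ->
  forall d d', mu f d' = d -> mu e (alpha s d') = rho D (eta s) (alpha s d).

Lemma sigma_bvecM d d' s t :
  sg (Rm (bv d s) (bv d' t)) = Rm (sg (bv d s)) (sg (bv d' t)).
Proof.
have [->|sn] := eqVneq s th; first by rewrite bvec_th Rmul0l sigma0 Rmul0l.
have [->|tn] := eqVneq t th; first by rewrite bvec_th Rmul0r sigma0 Rmul0r.
have [eE es] := lidemP sn; have [fE ft] := lidemP tn.
rewrite (sigma_bvec _ sn eE es) (sigma_bvec _ tn fE ft) !Rmul_bvec.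
have [->|st] := eqVneq (mul s t) th; first by rewrite !bvec_th sigma0.
have est : mul (lid s) (mul s t) = mul s t by rewrite mulA es.
rewrite (sigma_bvec _ st eE est); congr bv.
have esf : s = mul (mul (lid s) s) (lid t) by rewrite es mul_lidem.
rewrite !(rautM (Hmu eE)) (Halpha sn eE fE esf (erefl _)) (Hxi st eE (esym es)).
rewrite /rho (rautM (alpha_aut sn)) -!mulrA mulKr ?eta_unit //.
by rewrite mulVr ?mulr1 // eta_unit.
Qed.

Lemma sigmaM x y : sg (Rm x y) = Rm (sg x) (sg y).
Proof.
rewrite (bvec_decomp x) (bvec_decomp y) Rmul_sum_sum !sigma_sum Rmul_sum_sum.
apply: eq_bigr => a _; rewrite sigma_sum.
by apply: eq_bigr => b _; apply: sigma_bvecM.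
Qed.

(* Inverting the mu_e needs a choice of their inverses: [bijective] is a Prop. *)
Lemma sigma_bij : bijective sg.
Proof.
pose inverts e nu := e \in E -> cancel (mu e) nu /\ cancel nu (mu e).
have [nu nuK] : exists nu : S -> D -> D, forall e, inverts e (nu e).
  apply: functional_choice => e; rewrite /inverts.
  case: (boolP (e \in E)) => [eE | _].
    by case: (Hmu eE) => -[g h1 h2] _ _ _; exists g.
  by exists id.
exists (fun x : R => [ffun u : SS => nu (lid (val u)) (x u * (eta (val u))^-1)]).
  move=> x; apply/ffunP => u; rewrite !ffunE.
  have [lE _] := lidemP (valP u); have [muK _] := nuK _ lE.
  by rewrite mulrK ?eta_unit ?(valP u) // muK.
move=> x; apply/ffunP => u; rewrite !ffunE.
have [lE _] := lidemP (valP u); have [_ nuKV] := nuK _ lE.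
by rewrite nuKV divrK // eta_unit // (valP u).
Qed.

Lemma sigma_Raut0 : is_R_aut0 S mul th E D alpha xi sg.
Proof.
split; first by split;
  [exact: sigma_bij | exact: sigma1 | exact: sigmaD | exact: sigmaM].
  by move=> e eE; exists e; rewrite ?sigma_idem.
by move=> f fE; exists f; rewrite ?sigma_idem.
Qed.

End Sigma.

Section BasisForm.
Variables (g0 : R -> R) (mu : S -> D -> D) (eta : S -> D).
Hypothesis Hg0 : is_R_aut S mul th E D alpha xi g0.
Hypothesis Hmu : forall e, e \in E -> is_ring_aut D (mu e).
Hypothesis Heta : forall s, s != th -> eta s != 0.
Hypothesis g0E : forall d s e, s != th -> e \in E -> s = mul e s ->
  g0 (bv d s) = bv (mu e d * eta s) (id s).

Lemma Raut_basis_form_sigma : g0 =1 sigma S mul th E D mu eta.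
Proof.
have g0D : {morph g0 : x y / x + y} by case: Hg0.
have g00 : g0 0 = 0 by apply: (addrI (g0 0)); rewrite -g0D !addr0.
move=> x; rewrite (bvec_decomp x) (big_morph g0 g0D g00) sigma_sum //.
apply: eq_bigr => u _; have [lE lu] := lidemP (valP u).
by rewrite (g0E _ (valP u) lE (esym lu)) (sigma_bvec eta Hmu _ (valP u) lE lu).
Qed.

Lemma Raut_basis_form_xi s t e : mul s t != th -> e \in E -> s = mul e s ->
  mu e (xi s t) = eta s * alpha s (eta t) * xi s t * (eta (mul s t))^-1.
Proof.
move=> st eE es; have sn := mul_neq_thl st; have [fE ft] := lidemP (mul_neq_thr st).
have est : mul s t = mul e (mul s t) by rewrite mulA -es.
have : g0 (Rm (bv 1 s) (bv 1 t)) = Rm (g0 (bv 1 s)) (g0 (bv 1 t)) by case: Hg0.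
rewrite Rmul_bvec (g0E _ st eE est) (g0E _ sn eE es).
rewrite (g0E _ (mul_neq_thr st) fE (esym ft)) Rmul_bvec => /bvec_inj-/(_ st).
rewrite (raut1 (alpha_aut sn)) (raut1 (Hmu eE)) (raut1 (Hmu fE)) !mul1r => <-.
by rewrite mulrK // HD // Heta.
Qed.

Lemma Raut_basis_form_alpha s e f : s != th -> e \in E -> f \in E ->
  s = mul (mul e s) f ->
  forall d d', mu f d' = d -> mu e (alpha s d') = rho D (eta s) (alpha s d).
Proof.
move=> sn eE fE esf d d' <-.
have es : mul e s = s by rewrite {1}esf !mulA idemK // -esf.
have sf : mul s f = s by rewrite {1}esf -!mulA idemK // mulA -esf.
have : g0 (Rm (bv 1 s) (bv d' f)) = Rm (g0 (bv 1 s)) (g0 (bv d' f)) by case: Hg0.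
rewrite Rmul_bvec sf xi_idem_r // (g0E _ sn eE (esym es)) (g0E _ sn eE (esym es)).
rewrite (g0E _ (idem_neq_th fE) fE (esym (idemK fE))) Rmul_bvec /= sf xi_idem_r //.
rewrite (eta_idem Hmu Heta Raut_basis_form_xi fE) => /bvec_inj-/(_ sn).
rewrite (raut1 (Hmu eE)) !mul1r !mulr1 /rho => <-.
by rewrite mulrK // HD // Heta.
Qed.

Lemma Raut_basis_form_Z1 : Z1 S mul th E D alpha xi mu eta.
Proof.
by split; [exact: Hmu | exact: Heta | exact: Raut_basis_form_alpha |
  exact: Raut_basis_form_xi].
Qed.

End BasisForm.
End CrossedProduct.

Theorem mainTheorem5 (S : finType) (mul : S -> S -> S) (th : S) (E : {set S})
    (D : unitRingType) (alpha : S -> D -> D) (xi : S -> S -> D) :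
  square_free_semigroup S mul th E ->
  division_ring D ->
  normal_2cocycle S mul th E D alpha xi ->
  forall g : {ffun Sstar S th -> D} -> {ffun Sstar S th -> D},
    is_R_aut S mul th E D alpha xi g ->
    ((exists (mu : S -> D -> D) (eta : S -> D),
        Z1 S mul th E D alpha xi mu eta /\
        exists iota, is_inner S mul th E D alpha xi iota /\
                     forall x, g x = iota (sigma S mul th E D mu eta x))
     <-> Phi_rel S mul th E D alpha xi g id).
Proof.
move=> HS HD Hc g _; split.
- case=> mu [eta [[Hmu Heta Halpha Hxi] [iota [inner gE]]]].
  have [iota' [inner' iotaK]] := inner_inverse HS HD Hc inner.
  exists (sigma S mul th E D mu eta); split.
  + exact: sigma_Raut0.
  + by exists iota'; split => // x; rewrite gE iotaK.
  + exists mu, eta; split => //; first by split => //; exists id.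
    by move=> d s e sn eE es; apply: sigma_bvec.
- case=> g0 [[Hg0 _ _] [iota [inner g0E]] [mu [eta [Hmu Heta _ Hform]]]].
  have [iota' [inner' iotaK]] := inner_inverse HS HD Hc inner.
  exists mu, eta; split; first exact: Raut_basis_form_Z1 Hform.
  exists iota'; split => // x.
  by rewrite -(Raut_basis_form_sigma HS Hg0 Hmu Hform) g0E iotaK.
Qed.
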